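(* Let $n\ge 2$ be an integer and $A\subseteq L_n$. The following are equivalent: (i) $(X_n,\tau(A))$ is hereditarily Lindelöf; (ii) $|L_n\setminus A|\le\aleph_0$; (iii) $(X_n,\tau(A))$ is second-countable; (iv) $(X_n,\tau(A))$ is metrizable.
   Context: For $\overline{x},\overline{a}\in\mathbb R^n$ let $|\overline{x}-\overline{a}|$ be the Euclidean distance and $B(\overline{a},\epsilon)=\{\overline{x}\in\mathbb R^n:|\overline{x}-\overline{a}|<\epsilon\}$. Let $P_n=\{\overline{x}\in\mathbb R^n: x_n>0\}$, $L_n=\{\overline{x}\in\mathbb R^n: x_n=0\}$, $X_n=P_n\cup L_n$. For $\overline{a}\in L_n$ and $\epsilon>0$ put $\overline{a(\epsilon)}=(a_1,\dots,a_{n-1},\epsilon)$ and $\tilde B(\overline{a},\epsilon)=\{\overline{a}\}\cup B(\overline{a(\epsilon)},\epsilon)$. For $A\subseteq L_n$, the topology $\tau(A)$ on $X_n$ is generated by the local bases: at $\overline{a}\in P_n$, the sets $B(\overline{a},\epsilon)$ with $0<\epsilon<a_n$; at $\overline{a}\in A$, the sets $B(\overline{a},\epsilon)\cap X_n$ with $\epsilon>0$; at $\overline{a}\in L_n\setminus A$, the sets $\tilde B(\overline{a},\epsilon)$ with $\epsilon>0$. *)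

From mathcomp Require Import all_boot all_order all_algebra.
From mathcomp Require Import boolp classical_sets cardinality reals.
Set Implicit Arguments. Unset Strict Implicit. Unset Printing Implicit Defensive.
Import Order.TTheory GRing.Theory Num.Theory.
Local Open Scope ring_scope.
Local Open Scope classical_set_scope.

(* Points of R^n are row vectors 'rV[R]_n; coordinates x_1..x_n are x 0 i. *)
Section Defs.
Variable R : realType.
Variable n : nat.
Notation pt := 'rV[R]_n.

(* the last coordinate x_n (0 when n = 0, irrelevant since n >= 2) *)
Definition lastc : pt -> R :=
  match n as m return 'rV[R]_m -> R with
  | 0 => fun _ => 0
  | m.+1 => fun x => x 0 ord_max
  end.

Definition edist (x a : pt) : R := Num.sqrt (\sum_(i < n) (x 0 i - a 0 i) ^+ 2).

Definition ball (a : pt) (e : R) : set pt := [set x | edist x a < e].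

Definition Pn : set pt := [set x | 0 < lastc x].
Definition Ln : set pt := [set x | lastc x = 0].
Definition Xn : set pt := Pn `|` Ln.

Definition shift_up (a : pt) (e : R) : pt :=
  \row_(i < n) (if val i == n.-1 then e else a 0 i).

Definition tball (a : pt) (e : R) : set pt := [set a] `|` ball (shift_up a e) e.

Definition basic_nbhd (A : set pt) (a : pt) (U : set pt) : Prop :=
  [/\ Pn a -> exists2 e, 0 < e < lastc a & U = ball a e,
      A a -> exists2 e, 0 < e & U = ball a e `&` Xn
    & (Ln `\` A) a -> exists2 e, 0 < e & U = tball a e].

Definition tau_open (A : set pt) (U : set pt) : Prop :=
  U `<=` Xn /\ forall a, U a -> exists2 V, basic_nbhd A a V & V `<=` U.

Definition hered_lindelof (A : set pt) : Prop :=
  forall Y : set pt, Y `<=` Xn ->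
  forall F : set (set pt),
    (forall W, F W -> exists2 V, tau_open A V & W = V `&` Y) ->
    Y `<=` \bigcup_(W in F) W ->
    exists2 G : set (set pt), G `<=` F &
      countable G /\ Y `<=` \bigcup_(W in G) W.

Definition second_countable_tau (A : set pt) : Prop :=
  exists2 B : set (set pt), countable B &
    (forall V, B V -> tau_open A V) /\
    (forall U, tau_open A U -> U = \bigcup_(V in [set V | B V /\ V `<=` U]) V).

Definition is_metric_on (X : set pt) (d : pt -> pt -> R) : Prop :=
  [/\ forall x y, X x -> X y -> 0 <= d x y,
      forall x y, X x -> X y -> (d x y = 0 <-> x = y),
      forall x y, X x -> X y -> d x y = d y x
    & forall x y z, X x -> X y -> X z -> d x z <= d x y + d y z].

Definition metric_open (X : set pt) (d : pt -> pt -> R) (U : set pt) : Prop :=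
  U `<=` X /\ forall x, U x ->
    exists2 e, 0 < e & [set y | X y /\ d x y < e] `<=` U.

Definition metrizable_tau (A : set pt) : Prop :=
  exists d : pt -> pt -> R, is_metric_on Xn d /\
    forall U, tau_open A U <-> metric_open Xn d U.

End Defs.

(** The heart is (ii) => (iv).  For [c] in [L_n \ A] let [gauge c x] be
    [|x - c|^2 / (|x - c|^2 + x_n)] on [P_n], [0] at [c] and [1] elsewhere on
    [L_n].  The tangent ball [B(c(e), e)] is [{x | |x - c|^2 < 2 e x_n}], so the
    sublevel sets of [gauge c] are the tangent neighbourhoods of [c].  Near a
    point of [P_n] the gauges are Lipschitz uniformly in [c], and near a point
    [a] of [L_n] every gauge [gauge c] with [c <> a] is close to [1], except for
    centres [c] close to [a]; giving the centres weights tending to [0] leaves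
    only finitely many of those to control.  Hence, for an enumeration of the
    countable set [L_n \ A], the metric
    [|x - y| + sup_c w_c |gauge c x - gauge c y|] induces [tau(A)].
    The other implications are soft: a tangent ball meets [L_n] only in its
    centre, so [L_n \ A] is a discrete subspace and hereditary Lindelofness
    makes it countable; in a metric topology the dense set of rational points
    yields a countable base; a countable base makes every subspace Lindelof. *)

From mathcomp Require Import all_boot all_order all_algebra.
From mathcomp Require Import boolp classical_sets cardinality reals.
From mathcomp Require Import ring lra.
Set Implicit Arguments. Unset Strict Implicit. Unset Printing Implicit Defensive.
Import Order.TTheory GRing.Theory Num.Theory.
Local Open Scope ring_scope.
Local Open Scope classical_set_scope.

Lemma cauchy_schwarz (R : realFieldType) (I : finType) (u v : I -> R) :
  (\sum_i u i * v i) ^+ 2 <= (\sum_i u i ^+ 2) * (\sum_i v i ^+ 2).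
Proof.
set a := \sum_i u i ^+ 2; set b := \sum_i v i ^+ 2; set s := \sum_i u i * v i.
have a_ge0 : 0 <= a by apply: sumr_ge0 => i _; exact: sqr_ge0.
have b_ge0 : 0 <= b by apply: sumr_ge0 => i _; exact: sqr_ge0.
have quad_ge0 t : 0 <= t ^+ 2 * a + 2 * t * s + b.
  have -> : t ^+ 2 * a + 2 * t * s + b = \sum_i (t * u i + v i) ^+ 2.
    rewrite /a /s /b !mulr_sumr -!big_split /=.
    by apply: eq_bigr => i _; ring.
  by apply: sumr_ge0 => i _; exact: sqr_ge0.
have [a0|a_neq0] := eqVneq a 0.
  have u0 i : u i = 0.
    apply/eqP; rewrite -sqrf_eq0; apply/eqP.
    exact: (psumr_eq0P (P := xpredT) (fun j _ => sqr_ge0 (u j)) a0).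
  by rewrite /s big1 ?expr0n ?mulr_ge0 ?sqr_ge0 // => i _; rewrite u0 mul0r.
have a_gt0 : 0 < a by rewrite lt_def a_neq0 a_ge0.
have := quad_ge0 (- s / a).
have -> : (- s / a) ^+ 2 * a + 2 * (- s / a) * s + b = b - s ^+ 2 / a.
  by field.
by rewrite subr_ge0 ler_pdivrMr // mulrC.
Qed.

Lemma frac_dist_le (R : realFieldType) (u1 u2 v1 v2 : R) :
  0 <= u1 -> 0 <= u2 -> 0 < v1 -> 0 < v2 ->
  `|u1 / (u1 + v1) - u2 / (u2 + v2)| <= (`|v1 - v2| + `|u1 - u2|) / (u2 + v2).
Proof.
move=> u1_ge0 u2_ge0 v1_gt0 v2_gt0.
have [w1_gt0 w2_gt0] : 0 < u1 + v1 /\ 0 < u2 + v2 by split; lra.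
have -> : u1 / (u1 + v1) - u2 / (u2 + v2) =
    (u1 / (u1 + v1) * (v2 - v1) + v1 / (u1 + v1) * (u1 - u2)) / (u2 + v2).
  by field; rewrite !lt0r_neq0.
rewrite normrM [`|_^-1|]ger0_norm ?invr_ge0 ?(ltW w2_gt0) //.
apply: ler_wpM2r; first by rewrite invr_ge0 ltW.
have frac01 a : 0 <= a <= u1 + v1 -> 0 <= a / (u1 + v1) <= 1.
  by move=> /andP[a_ge0 a_le]; rewrite divr_ge0 ?(ltW w1_gt0) //= ler_pdivrMr ?mul1r.
have /andP[a_ge0 a_le1] : 0 <= u1 / (u1 + v1) <= 1 by apply: frac01; lra.
have /andP[b_ge0 b_le1] : 0 <= v1 / (u1 + v1) <= 1 by apply: frac01; lra.
apply: le_trans (ler_normD _ _) _.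
rewrite [`|_ * (v2 - v1)|]normrM [`|_ * (u1 - u2)|]normrM.
by rewrite (ger0_norm a_ge0) (ger0_norm b_ge0) [`|v2 - v1|]distrC lerD // ler_piMl.
Qed.

Lemma sqr_dist_le (R : realDomainType) (s1 s2 d : R) :
  0 <= s1 -> 0 <= s2 -> `|s1 - s2| <= d -> d <= 1 ->
  `|s1 ^+ 2 - s2 ^+ 2| <= d * (s2 ^+ 2 + 2).
Proof.
move=> s1_ge0 s2_ge0 s12 d_le1.
have -> : s1 ^+ 2 - s2 ^+ 2 = (s1 - s2) * (s1 + s2) by ring.
rewrite normrM [`|s1 + s2|]ger0_norm ?addr_ge0 //.
apply: ler_pM => //; first exact: addr_ge0.
have := ler_norm (s1 - s2); have := sqr_ge0 (s2 - 1); nra.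
Qed.

Section EuclideanDistance.
Variables (R : realType) (n : nat).
Implicit Types x y z a : 'rV[R]_n.

Definition sqdist x a : R := \sum_(i < n) (x 0 i - a 0 i) ^+ 2.

Lemma edistE x a : edist x a = Num.sqrt (sqdist x a).
Proof. by []. Qed.

Lemma sqdist_ge0 x a : 0 <= sqdist x a.
Proof. by apply: sumr_ge0 => i _; exact: sqr_ge0. Qed.

Lemma sqdistC x a : sqdist x a = sqdist a x.
Proof. by apply: eq_bigr => i _; rewrite -sqrrN opprB. Qed.

Lemma edist_ge0 x a : 0 <= edist x a.
Proof. exact: sqrtr_ge0. Qed.

Lemma edistC x a : edist x a = edist a x.
Proof. by rewrite !edistE sqdistC. Qed.

Lemma sqr_edist x a : edist x a ^+ 2 = sqdist x a.
Proof. by rewrite edistE sqr_sqrtr // sqdist_ge0. Qed.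

Lemma edist_ltE x a e : 0 < e -> (edist x a < e) = (sqdist x a < e ^+ 2).
Proof.
move=> e_gt0; rewrite edistE -[X in _ < X](@ger0_norm _ e) ?ltW //.
by rewrite -sqrtr_sqr ltr_sqrt // exprn_gt0.
Qed.

Lemma edistxx x : edist x x = 0.
Proof. by rewrite edistE /sqdist big1 ?sqrtr0 // => i _; rewrite subrr expr0n. Qed.

Lemma edist_eq0 x a : edist x a = 0 -> x = a.
Proof.
rewrite edistE => /eqP; rewrite sqrtr_eq0 => sq_le0.
have sq0 : sqdist x a = 0 by apply/le_anti; rewrite sq_le0 sqdist_ge0.
apply/matrixP => i j; rewrite (ord1 i); apply/eqP; rewrite -subr_eq0 -sqrf_eq0.
apply/eqP; exact: (psumr_eq0P (P := xpredT) (fun k _ => sqr_ge0 _) sq0).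
Qed.

Lemma coord_le_edist x a i : `|x 0 i - a 0 i| <= edist x a.
Proof.
rewrite edistE -sqrtr_sqr ler_sqrt ?sqdist_ge0 // /sqdist (bigD1 i) //= lerDl.
by apply: sumr_ge0 => j _; exact: sqr_ge0.
Qed.

Lemma edist_triangle x y z : edist x z <= edist x y + edist y z.
Proof.
set a := edist x y; set b := edist y z.
have [a_ge0 b_ge0] : 0 <= a /\ 0 <= b by split; exact: edist_ge0.
rewrite -ler_sqr ?nnegrE ?addr_ge0 ?edist_ge0 // sqr_edist.
set s := \sum_i (x 0 i - y 0 i) * (y 0 i - z 0 i).
have -> : sqdist x z = a ^+ 2 + 2 * s + b ^+ 2.
  rewrite !sqr_edist /s mulr_sumr -!big_split /=; apply: eq_bigr => i _; ring.
have : s <= a * b.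
  apply: le_trans (ler_norm s) _; rewrite -ler_sqr ?nnegrE ?mulr_ge0 //.
  by rewrite real_normK ?num_real // exprMn !sqr_edist cauchy_schwarz.
nra.
Qed.

End EuclideanDistance.

Section TangentBalls.
Variables (R : realType) (m : nat).
Local Notation pt := 'rV[R]_m.+1.
Implicit Types x y c : pt.

Lemma lastcE x : lastc x = x 0 ord_max.
Proof. by []. Qed.

Lemma lastc_le_edist x y : `|lastc x - lastc y| <= edist x y.
Proof. exact: coord_le_edist. Qed.

Lemma lastc_shift_up c s : lastc (shift_up c s) = s.
Proof. by rewrite lastcE mxE /= eqxx. Qed.

Lemma sqdist_shift_up c y s : lastc c = 0 ->
  sqdist y (shift_up c s) = sqdist y c - 2 * s * lastc y + s ^+ 2.
Proof.
move=> c0; rewrite /sqdist !big_ord_recr /=.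
rewrite [in X in _ = X - _ + _](eq_bigr (fun i : 'I_m =>
  (y 0 (widen_ord (leqnSn m) i) - shift_up c s 0 (widen_ord (leqnSn m) i)) ^+ 2)).
  by rewrite mxE /= eqxx -!lastcE c0; ring.
by move=> i _; rewrite mxE /= ifN_eq // neq_ltn ltn_ord.
Qed.

Lemma tangent_ballE c y s : 0 < s -> lastc c = 0 ->
  ball (shift_up c s) s y <-> sqdist y c < 2 * s * lastc y.
Proof.
move=> s_gt0 c0; change (edist y (shift_up c s) < s <-> sqdist y c < 2 * s * lastc y).
by rewrite edist_ltE // sqdist_shift_up //; split => ?; lra.
Qed.

Lemma tangent_ball_lastc c y s : 0 < s -> lastc c = 0 ->
  ball (shift_up c s) s y -> 0 < lastc y < 2 * s.
Proof.
move=> s_gt0 c0 yB; have /(tangent_ballE _ s_gt0 c0) sq_lt := yB.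
have ys_lt : edist y (shift_up c s) < s := yB.
have := lastc_le_edist y (shift_up c s); rewrite lastc_shift_up => ys_le.
have := sqdist_ge0 y c; have := ler_norm (lastc y - s).
by move=> ? ?; apply/andP; split; nra.
Qed.

Lemma tangent_ball_sqdist c y s : 0 < s -> lastc c = 0 ->
  ball (shift_up c s) s y -> sqdist y c < 4 * s ^+ 2.
Proof.
move=> s_gt0 c0 yB; have /andP[y_gt0 y_lt] := tangent_ball_lastc s_gt0 c0 yB.
have := (tangent_ballE _ s_gt0 c0).1 yB; nra.
Qed.

End TangentBalls.

Section TauTopology.
Variables (R : realType) (m : nat) (A : set 'rV[R]_m.+1).
Hypothesis AL : A `<=` @Ln R m.+1.
Local Notation pt := 'rV[R]_m.+1.
Local Notation P := (@Pn R m.+1).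
Local Notation L := (@Ln R m.+1).
Local Notation X := (@Xn R m.+1).
Local Notation C := (L `\` A).
Implicit Types x y c : pt.

Lemma Pn_Ln x : P x -> ~ L x.
Proof. by rewrite /Pn /Ln /= => x_gt0 x0; rewrite x0 ltxx in x_gt0. Qed.

Lemma Xn_cases x : X x -> [\/ P x, A x | C x].
Proof.
case=> [Px|Lx]; first exact: Or31.
by have [Ax|nAx] := pselect (A x); [apply: Or32 | apply: Or33].
Qed.

Lemma basic_nbhd_Pn y d : P y -> 0 < d < lastc y -> basic_nbhd A y (ball y d).
Proof.
move=> Py d_bd; split=> [_|/AL/(Pn_Ln Py)//|[/(Pn_Ln Py)]//].
by exists d.
Qed.

Lemma basic_nbhd_A a e : A a -> 0 < e -> basic_nbhd A a (ball a e `&` X).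
Proof.
move=> Aa e_gt0; split=> [/Pn_Ln/(_ (AL Aa))//|_|[]//].
by exists e.
Qed.

Lemma basic_nbhd_C c e : C c -> 0 < e -> basic_nbhd A c (tball c e).
Proof.
move=> [Lc nAc] e_gt0; split=> [/Pn_Ln//|//|_].
by exists e.
Qed.

Lemma tangent_ball_Pn c e : L c -> 0 < e -> ball (shift_up c e) e `<=` P.
Proof. by move=> Lc e_gt0 y /(tangent_ball_lastc e_gt0 Lc) /andP[]. Qed.

Lemma tball_Xn c e : L c -> 0 < e -> tball c e `<=` X.
Proof.
move=> Lc e_gt0 y [->|yB]; first by right.
by left; exact: tangent_ball_Pn yB.
Qed.

Lemma tball_Ln c e y : L c -> 0 < e -> tball c e y -> L y -> y = c.
Proof. by move=> Lc e_gt0 [//|/(tangent_ball_Pn Lc e_gt0)/Pn_Ln]. Qed.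

Lemma ball_sub_ball x y r d : edist y x + d <= r -> ball y d `<=` ball x r.
Proof.
rewrite /ball => le_r z /= zy.
by have := edist_triangle z y x; lra.
Qed.

Lemma ball_Pn x r : r <= lastc x -> ball x r `<=` P.
Proof.
move=> r_le z zx; change (0 < lastc z); have : edist z x < r := zx.
by have := lastc_le_edist z x; rewrite distrC;
  have := ler_norm (lastc x - lastc z); lra.
Qed.

Lemma tau_open_tball c e : C c -> 0 < e -> tau_open A (tball c e).
Proof.
move=> Cc e_gt0; have Lc : L c by case: Cc.
split=> [|y [->|yB]]; first exact: tball_Xn.
  by exists (tball c e) => //; exact: basic_nbhd_C.
have y_gt0 : 0 < lastc y by exact: tangent_ball_Pn yB.
have yc_lt : edist y (shift_up c e) < e := yB.
pose d := Num.min (e - edist y (shift_up c e)) (lastc y / 2).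
have d_gt0 : 0 < d by rewrite lt_min subr_gt0 yc_lt andTb; lra.
exists (ball y d).
  by apply: basic_nbhd_Pn => //; rewrite d_gt0 andTb /d gt_min; apply/orP; right; lra.
move=> z /(@ball_sub_ball (shift_up c e) y e d) zB; right; apply: zB.
by rewrite -lerBrDl ge_min lexx.
Qed.

Lemma basic_nbhd_ball_sub x V : X x -> basic_nbhd A x V ->
  exists p r, 0 < r /\ ball p r `<=` V.
Proof.
move=> Xx [VP VA VC]; case: (Xn_cases Xx) => [Px|Ax|Cx].
- by have [e /andP[e_gt0 _] ->] := VP Px; exists x, e; split.
- have [e e_gt0 ->] := VA Ax; have Lx := AL Ax; have e2_gt0 : 0 < e / 2 by lra.
  exists (shift_up x (e / 2)), (e / 2); split=> // y yB; split.
    have := tangent_ball_sqdist e2_gt0 Lx yB.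
    by rewrite /ball /= edistC edist_ltE // sqdistC; lra.
  by left; exact: tangent_ball_Pn yB.
- have [e e_gt0 ->] := VC Cx.
  by exists (shift_up x e), e; split=> // y yB; right.
Qed.

End TauTopology.

Section CountabilityAxioms.
Variables (R : realType) (m : nat) (A : set 'rV[R]_m.+1).
Hypothesis AL : A `<=` @Ln R m.+1.
Local Notation pt := 'rV[R]_m.+1.
Local Notation L := (@Ln R m.+1).
Local Notation X := (@Xn R m.+1).
Local Notation C := (L `\` A).

Lemma hered_lindelof_countable : hered_lindelof A -> countable C.
Proof.
move=> HL; have CX : C `<=` X by move=> c [Lc _]; right.
have tballC_L c c' : C c -> C c' -> (tball c' 1 `&` C) c -> c = c'.
  by move=> [Lc _] [Lc' _] [cB _]; exact: tball_Ln Lc' ltr01 cB Lc.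
pose F := [set tball c 1 `&` C | c in C].
have [|c Cc|G GF [cG CG]] := HL C CX F.
- move=> _ [c Cc <-]; exists (tball c 1) => //; exact: tau_open_tball.
- by exists (tball c 1 `&` C); [exists c | split=> //; left].
have G_tball c : C c -> G (tball c 1 `&` C).
  move=> Cc; have [_ /[dup] /GF [c' Cc' <-] GW cW] := CG c Cc.
  by rewrite (tballC_L c c').
move/countable_injP: cG => [f f_inj]; apply/countable_injP.
exists (fun c => f (tball c 1 `&` C)) => c c' /set_mem Cc /set_mem Cc' fE.
apply: tballC_L => //; rewrite -(f_inj _ _ (mem_set (G_tball c Cc))
  (mem_set (G_tball c' Cc')) fE).
by split=> //; left.
Qed.

Lemma second_countable_hered_lindelof :
  second_countable_tau A -> hered_lindelof A.
Proof.
move=> [B cB [_ Bbase]] Y _ F FO YF.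
pose Q b W := F W /\ exists V, [/\ tau_open A V, W = V `&` Y & b `<=` V].
pose B' := [set b | B b /\ exists W, Q b W].
have /choice [pick pickQ] b : exists W, B' b -> Q b W.
  by have [[_ [W QW]]|nB'b] := pselect (B' b); [exists W | exists set0].
exists (pick @` B'); first by move=> _ [b B'b <-]; case: (pickQ b B'b).
split.
  apply: sub_countable (card_image_le _ _) _.
  by apply: sub_countable cB; apply: subset_card_le => b [].
move=> y Yy; have [W FW Wy] := YF y Yy; have [V oV WE] := FO W FW.
have : V y by move: Wy; rewrite WE => -[].
rewrite (Bbase V oV) => -[b [Bb bV] yb].
have B'b : B' b by split=> //; exists W; split=> //; exists V.
exists (pick b); first by exists b.
by have [_ [V' [_ -> bV']]] := pickQ b B'b; split=> //; exact: bV' yb.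
Qed.

Lemma rat_point_near (p : pt) r : 0 < r ->
  exists q : 'rV[rat]_m.+1, edist (map_mx ratr q) p < r.
Proof.
move=> r_gt0; pose N : R := m.+1%:R; pose d := r / (N + 1).
have N_ge1 : 1 <= N by rewrite ler1n.
have d_gt0 : 0 < d by rewrite divr_gt0 //; lra.
have /choice [f fP] i : exists t : rat, p 0 i - d < ratr t < p 0 i + d.
  have [|t] := @rat_in_itvoo R (p 0 i - d) (p 0 i + d); first lra.
  by rewrite in_itv /=; exists t.
exists (\row_i f i); rewrite edist_ltE //.
have : sqdist (map_mx ratr (\row_i f i)) p <= \sum_(i < m.+1) d ^+ 2.
  apply: ler_sum => i _; rewrite !mxE -ler_sqrt ?sqr_ge0 // !sqrtr_sqr.
  have /andP[? ?] := fP i; rewrite ler_norml (ger0_norm (ltW d_gt0)); lra.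
rewrite sumr_const card_ord -mulr_natr -/N => le_Nd.
have <- : d * (N + 1) = r by rewrite divfK //; lra.
by apply: le_lt_trans le_Nd _; nra.
Qed.

Definition rat_points : set pt := [set x | X x /\ exists q, x = map_mx ratr q].

Lemma countable_rat_points : countable rat_points.
Proof.
apply: (@sub_countable _ _ _ (map_mx ratr @` [set: 'rV[rat]_m.+1])).
  by apply: subset_card_le => x [_ [q ->]]; exists q.
by apply: sub_countable (card_image_le _ _) _; exact: countableP.
Qed.

Lemma rat_points_dense U x : tau_open A U -> U x -> exists2 q, rat_points q & U q.
Proof.
move=> [UX UO] Ux; have [V xV VU] := UO x Ux.
have [p [r [r_gt0 pV]]] := basic_nbhd_ball_sub AL (UX x Ux) xV.
have [q qp] := rat_point_near p r_gt0.
have Uq : U (map_mx ratr q) by apply/VU/pV.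
by exists (map_mx ratr q) => //; split; [exact: UX | exists q].
Qed.

Definition metric_ball (d : pt -> pt -> R) x r := [set y | X y /\ d x y < r].

Lemma metric_open_ball d x r : is_metric_on X d -> X x ->
  metric_open X d (metric_ball d x r).
Proof.
move=> [_ _ _ d_tri] Xx; split=> [y []//|y [Xy xy]].
exists (r - d x y) => [|z [Xz yz]]; first by rewrite subr_gt0.
by split=> //; have := d_tri x y z Xx Xy Xz; lra.
Qed.

Lemma metrizable_second_countable : metrizable_tau A -> second_countable_tau A.
Proof.
move=> [d [dm tauE]]; have [_ d_eq0 dC d_tri] := dm.
pose B := (fun qk : pt * nat => metric_ball d qk.1 qk.2.+1%:R^-1) @` (rat_points `*` setT).
exists B.
  apply: sub_countable (card_image_le _ _) _.
  by apply: countableX; [exact: countable_rat_points | exact: countableP].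
split=> [_ [[q k] [[Xq _] _] <-]|U oU]; first by apply/tauE; exact: metric_open_ball.
apply/seteqP; split=> [x Ux|y [V [_ VU] /VU]//].
have [UX /(_ x Ux) [e e_gt0 eU]] := (tauE U).1 oU; have Xx := UX x Ux.
have [k k_lt] : exists k, k.+1%:R^-1 < e / 2.
  by have [k] := @ltr_add_invr R 0 (e / 2) ltac:(lra); rewrite add0r; exists k.
pose r : R := k.+1%:R^-1.
have xx : metric_ball d x r x.
  by split=> //; rewrite (proj2 (d_eq0 x x Xx Xx) erefl) invr_gt0 ltr0n.
have open_ball : tau_open A (metric_ball d x r) by apply/tauE; exact: metric_open_ball.
have [q /[dup] qR [Xq _] [_ xq]] := rat_points_dense open_ball xx.
exists (metric_ball d q r); last by split=> //; rewrite dC.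
split=> [|z [Xz qz]]; first by exists (q, k).
by apply: eU; split=> //; have := d_tri x q z Xx Xq Xz; rewrite -/r in k_lt; lra.
Qed.

End CountabilityAxioms.

Section Gauge.
Variables (R : realType) (m : nat).
Local Notation pt := 'rV[R]_m.+1.
Implicit Types x y c : pt.

Definition gauge c x : R :=
  if 0 < lastc x then sqdist x c / (sqdist x c + lastc x) else (x != c)%:R.

Lemma gauge_Pn c x : 0 < lastc x -> gauge c x = sqdist x c / (sqdist x c + lastc x).
Proof. by rewrite /gauge => ->. Qed.

Lemma gauge_notPn c x : ~ 0 < lastc x -> gauge c x = (x != c)%:R.
Proof. by rewrite /gauge => /negP/negbTE ->. Qed.

Lemma gauge_ge0_le1 c x : 0 <= gauge c x <= 1.
Proof.
have [x_gt0|x_le0] := pselect (0 < lastc x); last first.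
  by rewrite gauge_notPn //; case: (x != c); rewrite ?lexx ?ler01.
rewrite gauge_Pn //; have := sqdist_ge0 x c => sq_ge0.
have w_gt0 : 0 < sqdist x c + lastc x by lra.
by rewrite divr_ge0 ?(ltW w_gt0) //= ler_pdivrMr // mul1r lerDl ltW.
Qed.

Lemma gauge_dist_le1 c x y : `|gauge c x - gauge c y| <= 1.
Proof.
have /andP[? ?] := gauge_ge0_le1 c x; have /andP[? ?] := gauge_ge0_le1 c y.
by rewrite ler_norml; apply/andP; split; lra.
Qed.

Lemma gauge_le_ratio c y : 0 < lastc y -> gauge c y <= sqdist y c / lastc y.
Proof.
move=> y_gt0; rewrite gauge_Pn // ler_wpM2l ?sqdist_ge0 // lef_pV2 ?posrE //.
  by rewrite lerDr sqdist_ge0.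
by have := sqdist_ge0 y c; lra.
Qed.

Lemma one_sub_gauge_le c y : 0 < lastc y -> 0 < sqdist y c ->
  1 - gauge c y <= lastc y / sqdist y c.
Proof.
move=> y_gt0 sq_gt0; rewrite gauge_Pn //.
have -> : 1 - sqdist y c / (sqdist y c + lastc y) = lastc y / (sqdist y c + lastc y).
  by field; rewrite lt0r_neq0 //; lra.
by rewrite ler_wpM2l ?(ltW y_gt0) // lef_pV2 ?posrE ?lerDl ?(ltW y_gt0) //; lra.
Qed.

Lemma gauge_lt_sqdist c y t : 0 < lastc y -> t <= 1 / 2 -> gauge c y < t ->
  sqdist y c < 2 * t * lastc y.
Proof.
move=> y_gt0 t_le; have := sqdist_ge0 y c => sq_ge0.
rewrite gauge_Pn // ltr_pdivrMr; last by lra.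
have := ler_wpM2l sq_ge0 t_le; rewrite mulrDr; lra.
Qed.

Lemma gauge_lipschitz c x y : 0 < lastc x -> 0 < lastc y -> edist x y <= 1 ->
  `|gauge c x - gauge c y| <= edist x y * (1 + 3 / lastc y).
Proof.
move=> x_gt0 y_gt0 xy_le1; rewrite !gauge_Pn //.
set d := edist x y; have d_ge0 : 0 <= d by exact: edist_ge0.
have sqE z : sqdist z c = edist z c ^+ 2 by rewrite sqr_edist.
have dxy_y : `|edist x c - edist y c| <= d.
  rewrite ler_norml; have := edist_triangle x y c; have := edist_triangle y x c.
  by rewrite (edistC y x) -/d => ? ?; apply/andP; split; lra.
have dsq := sqr_dist_le (edist_ge0 x c) (edist_ge0 y c) dxy_y xy_le1.
rewrite -!sqE in dsq.
have sq_ge0 := sqdist_ge0 y c.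
apply: le_trans (frac_dist_le (sqdist_ge0 _ _) sq_ge0 x_gt0 y_gt0) _.
rewrite ler_pdivrMr; last by lra.
have := lastc_le_edist x y; rewrite -/d => v_le.
have key : sqdist y c + 3 <= (1 + 3 / lastc y) * (sqdist y c + lastc y).
  have -> : (1 + 3 / lastc y) * (sqdist y c + lastc y) =
      sqdist y c + 3 + (lastc y + 3 * (sqdist y c / lastc y)).
    by field; rewrite lt0r_neq0.
  rewrite lerDl addr_ge0 ?(ltW y_gt0) //.
  by rewrite mulr_ge0 ?divr_ge0 ?(ltW y_gt0).
have := ler_wpM2l d_ge0 key; rewrite mulrA; lra.
Qed.

End Gauge.

Section GaugeMetric.
Variables (R : realType) (m : nat) (A : set 'rV[R]_m.+1).
Hypothesis AL : A `<=` @Ln R m.+1.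
Local Notation pt := 'rV[R]_m.+1.
Local Notation L := (@Ln R m.+1).
Local Notation X := (@Xn R m.+1).
Local Notation C := (L `\` A).
Variable idx : pt -> nat.
Hypothesis idx_inj : {in C &, injective idx}.
Implicit Types x y z a c : pt.

Definition weight c : R := (idx c).+1%:R^-1.

(* [0] keeps the set nonempty when [C] is empty. *)
Definition gauge_gaps x y : set R :=
  [set t | t = 0 \/ exists2 c, C c & t = weight c * `|gauge c x - gauge c y|].

Definition gauge_sup x y : R := sup (gauge_gaps x y).

Definition gauge_dist x y : R := edist x y + gauge_sup x y.

Lemma weight_gt0 c : 0 < weight c.
Proof. by rewrite invr_gt0 ltr0n. Qed.

Lemma weight_le1 c : weight c <= 1.
Proof. by rewrite invf_le1 ?ltr0n // ler1n. Qed.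

Lemma weighted_gauge_dist_le c x y :
  weight c * `|gauge c x - gauge c y| <= `|gauge c x - gauge c y|.
Proof. by rewrite ler_piMl ?normr_ge0 ?weight_le1 ?ltW ?weight_gt0. Qed.

Lemma gauge_gaps_has_sup x y : has_sup (gauge_gaps x y).
Proof.
split; first by exists 0; left.
exists 1 => _ [->|[c _ ->]]; first exact: ler01.
exact: le_trans (weighted_gauge_dist_le c x y) (gauge_dist_le1 c x y).
Qed.

Lemma gauge_sup_ge0 x y : 0 <= gauge_sup x y.
Proof. by apply: sup_upper_bound; [exact: gauge_gaps_has_sup | left]. Qed.

Lemma le_gauge_sup x y c : C c ->
  weight c * `|gauge c x - gauge c y| <= gauge_sup x y.
Proof.
by move=> Cc; apply: sup_upper_bound; [exact: gauge_gaps_has_sup | right; exists c].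
Qed.

Lemma gauge_sup_le x y b : 0 <= b ->
  (forall c, C c -> weight c * `|gauge c x - gauge c y| <= b) -> gauge_sup x y <= b.
Proof.
move=> b_ge0 gap_le; apply: ge_sup; first by exists 0; left.
by move=> _ [->|[c Cc ->]] //; exact: gap_le.
Qed.

Lemma gauge_supC x y : gauge_sup x y = gauge_sup y x.
Proof.
congr sup; apply/seteqP; split=> _ [->|[c Cc ->]];
  by [left | right; exists c => //; rewrite distrC].
Qed.

Lemma gauge_supxx x : gauge_sup x x = 0.
Proof.
apply/le_anti; rewrite gauge_sup_ge0 andbT; apply: gauge_sup_le => // c _.
by rewrite subrr normr0 mulr0.
Qed.

Lemma gauge_sup_triangle x y z : gauge_sup x z <= gauge_sup x y + gauge_sup y z.
Proof.
apply: gauge_sup_le => [|c Cc]; first by rewrite addr_ge0 ?gauge_sup_ge0.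
apply: le_trans (lerD (le_gauge_sup x y Cc) (le_gauge_sup y z Cc)).
rewrite -mulrDr ler_wpM2l ?(ltW (weight_gt0 c)) //.
by rewrite -[X in `|X|](subrKA (gauge c y)) ler_normD.
Qed.

Lemma gauge_dist_metric : is_metric_on X gauge_dist.
Proof.
split=> [x y _ _|x y _ _|x y _ _|x y z _ _ _].
- by rewrite addr_ge0 ?edist_ge0 ?gauge_sup_ge0.
- split=> [|->]; last by rewrite /gauge_dist edistxx gauge_supxx addr0.
  have := edist_ge0 x y; have := gauge_sup_ge0 x y.
  by rewrite /gauge_dist => ? ? ?; apply: edist_eq0; lra.
- by rewrite /gauge_dist edistC gauge_supC.
- have := edist_triangle x y z; have := gauge_sup_triangle x y z.
  by rewrite /gauge_dist; lra.
Qed.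

Lemma edist_le_gauge_dist x y : edist x y <= gauge_dist x y.
Proof. by rewrite lerDl gauge_sup_ge0. Qed.

Lemma low_index_edist_lb a K : exists2 r, 0 < r &
  forall c, C c -> c != a -> (idx c < K)%N -> r <= edist a c.
Proof.
elim: K => [|K [r r_gt0 r_le]]; first by exists 1.
have [[c [Cc ca] cK]|noK] := pselect (exists2 c, C c /\ c != a & idx c = K).
  have ac_gt0 : 0 < edist a c.
    by rewrite lt_def edist_ge0 andbT; apply: contra_neq ca => /edist_eq0 ->.
  exists (Num.min r (edist a c)) => [|c' Cc' c'a]; first by rewrite lt_min r_gt0.
  rewrite ltnS leq_eqVlt => /orP[/eqP c'K|c'K]; last by rewrite ge_min r_le.
  by rewrite (idx_inj (mem_set Cc') (mem_set Cc)) ?c'K // ge_min lexx orbT.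
exists r => // c' Cc' c'a; rewrite ltnS leq_eqVlt => /orP[/eqP c'K|]; last exact: r_le.
by exfalso; apply: noK; exists c'.
Qed.

Lemma weighted_gauge_near_Ln a e : L a -> 0 < e -> exists2 d, 0 < d &
  forall y, edist a y < d -> forall c, C c -> c != a ->
  weight c * `|gauge c a - gauge c y| <= e.
Proof.
move=> a0 e_gt0; have [K K_lt] : exists K, K.+1%:R^-1 < e.
  by have [K] := @ltr_add_invr R 0 e e_gt0; rewrite add0r; exists K.
have [r r_gt0 r_le] := low_index_edist_lb a K.
pose d := Num.min (r / 2) (e * r ^+ 2 / 4).
have d_gt0 : 0 < d by rewrite lt_min !divr_gt0 ?mulr_gt0 ?exprn_gt0.
exists d => // y ay c Cc ca.
(* Centres of index >= K weigh less than e; the others are r-far from a. *)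
have [K_le|idx_lt] := leqP K (idx c).
  have w_le : weight c <= K.+1%:R^-1 by rewrite lef_pV2 ?posrE ?ltr0n // ler_nat.
  apply: le_trans (ler_wpM2l (ltW (weight_gt0 c)) (gauge_dist_le1 c a y)) _.
  by rewrite mulr1; apply: le_trans w_le (ltW K_lt).
apply: le_trans (weighted_gauge_dist_le c a y) _.
have yc : r / 2 <= edist y c.
  have : d <= r / 2 by rewrite ge_min lexx.
  by have := r_le c Cc ca idx_lt; have := edist_triangle a y c; lra.
rewrite gauge_notPn; last by rewrite a0 ltxx.
rewrite eq_sym ca mulr1n; have [y_gt0|y_le0] := pselect (0 < lastc y); last first.
  rewrite gauge_notPn //; case: eqP => [yc0|_]; last by rewrite subrr normr0 ltW.
  by move: yc; rewrite yc0 edistxx; lra.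
have sq_ge : r ^+ 2 / 4 <= sqdist y c.
  rewrite -sqr_edist (_ : r ^+ 2 / 4 = (r / 2) ^+ 2); last by field.
  by rewrite ler_sqr ?nnegrE ?edist_ge0 ?divr_ge0 ?(ltW r_gt0).
have sq_gt0 : 0 < sqdist y c by apply: lt_le_trans sq_ge; rewrite divr_gt0 ?exprn_gt0.
rewrite ger0_norm; last by rewrite subr_ge0; case/andP: (gauge_ge0_le1 c y).
apply: le_trans (one_sub_gauge_le y_gt0 sq_gt0) _; rewrite ler_pdivrMr //.
have : lastc y <= edist a y.
  by have := lastc_le_edist y a; rewrite a0 subr0 gtr0_norm // edistC.
have : d <= e * r ^+ 2 / 4 by rewrite ge_min lexx orbT.
by have := ler_wpM2l (ltW e_gt0) sq_ge; rewrite mulrA; lra.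
Qed.

Lemma gauge_dist_near_Pn x y : 0 < lastc x -> edist x y <= 1 ->
  edist x y <= lastc x / 2 -> gauge_dist x y <= edist x y * (2 + 6 / lastc x).
Proof.
move=> x_gt0 xy_le1 xy_le; set d := edist x y.
have y_ge : lastc x / 2 <= lastc y.
  by have := lastc_le_edist x y; have := ler_norm (lastc x - lastc y); lra.
have y_gt0 : 0 < lastc y by lra.
have ratio_le : 3 / lastc y <= 6 / lastc x.
  by rewrite ler_pdivrMr // mulrAC ler_pdivlMr //; lra.
suff : gauge_sup x y <= d * (1 + 6 / lastc x) by rewrite /gauge_dist -/d; lra.
apply: gauge_sup_le => [|c _].
  by rewrite mulr_ge0 ?edist_ge0 // addr_ge0 ?divr_ge0 ?(ltW x_gt0).
apply: le_trans (weighted_gauge_dist_le c x y) _.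
apply: le_trans (gauge_lipschitz c x_gt0 y_gt0 xy_le1) _.
by rewrite ler_wpM2l ?edist_ge0 // lerD2l.
Qed.

Lemma gauge_dist_near_A a e : A a -> 0 < e -> exists2 d, 0 < d &
  forall y, edist a y < d -> gauge_dist a y < e.
Proof.
move=> Aa e_gt0; have e2_gt0 : 0 < e / 2 by lra.
have [d d_gt0 near_a] := weighted_gauge_near_Ln (AL Aa) e2_gt0.
exists (Num.min d (e / 2)) => [|y]; first by rewrite lt_min d_gt0.
rewrite lt_min => /andP[ay_d ay_e].
suff : gauge_sup a y <= e / 2 by rewrite /gauge_dist; lra.
apply: gauge_sup_le => [|c Cc]; first exact: ltW.
by apply: near_a => //; apply: contraPneq Cc => ->; case.
Qed.

Lemma gauge_dist_near_C c e : C c -> 0 < e -> exists2 d, 0 < d &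
  forall y, tball c d y -> gauge_dist c y < e.
Proof.
move=> Cc e_gt0; have [c0 _] := Cc; have e2_gt0 : 0 < e / 2 by lra.
have [d1 d1_gt0 near_c] := weighted_gauge_near_Ln c0 e2_gt0.
pose d1' := Num.min d1 (e / 2); pose d := d1' / 2.
have [d_gt0 d_le1 d_le2] : [/\ 0 < d, 2 * d <= d1 & 2 * d <= e / 2].
  have : 0 < d1' by rewrite lt_min d1_gt0 e2_gt0.
  have : d1' <= d1 by rewrite ge_min lexx.
  have : d1' <= e / 2 by rewrite ge_min lexx orbT.
  by rewrite /d; split; lra.
exists d => // y [->|yB]; first by rewrite /gauge_dist edistxx gauge_supxx addr0.
have /andP[y_gt0 _] := tangent_ball_lastc d_gt0 c0 yB.
have sq_lt := (tangent_ballE _ d_gt0 c0).1 yB.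
have cy_lt : edist c y < 2 * d.
  rewrite edistC edist_ltE; last lra.
  rewrite (_ : (2 * d) ^+ 2 = 4 * d ^+ 2); last by ring.
  exact: tangent_ball_sqdist yB.
suff : gauge_sup c y <= e / 2 by rewrite /gauge_dist; lra.
apply: gauge_sup_le => [|c' Cc']; first exact: ltW.
have [->|c'c] := eqVneq c' c; last first.
  by apply: near_c => //; lra.
apply: le_trans (weighted_gauge_dist_le c c y) _.
rewrite gauge_notPn ?c0 ?ltxx // eqxx sub0r normrN.
rewrite ger0_norm; last by case/andP: (gauge_ge0_le1 c y).
apply: le_trans (gauge_le_ratio c y_gt0) _; rewrite ler_pdivrMr //.
by have := ler_wpM2r (ltW y_gt0) d_le2; rewrite [_ * d]mulrC in sq_lt; lra.
Qed.

Lemma gauge_ball_sub_tball c e : C c -> 0 < e ->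
  exists2 r, 0 < r & metric_ball gauge_dist c r `<=` tball c e.
Proof.
move=> Cc e_gt0; have [c0 _] := Cc; pose t := Num.min (1 / 2) e.
have [t_gt0 t_le1 t_le] : [/\ 0 < t, t <= 1 / 2 & t <= e].
  by rewrite lt_min e_gt0 andbT !ge_min !lexx orbT; split=> //; lra.
exists (weight c * t) => [|y [_ cy_lt]]; first by rewrite mulr_gt0 ?weight_gt0.
have gy_lt : gauge c y < t.
  have := le_gauge_sup c y Cc; have := edist_ge0 c y.
  rewrite gauge_notPn ?c0 ?ltxx // eqxx sub0r normrN => ? ?.
  rewrite -(ltr_pM2l (weight_gt0 c)).
  apply: le_lt_trans (ler_wpM2l (ltW (weight_gt0 c)) (ler_norm (gauge c y))) _.
  by move: cy_lt; rewrite /gauge_dist; lra.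
have [->|yc] := eqVneq y c; first by left.
have [y_gt0|y_le0] := pselect (0 < lastc y); last first.
  by move: gy_lt; rewrite gauge_notPn // yc mulr1n; lra.
right; apply/(tangent_ballE _ e_gt0 c0).
apply: lt_le_trans (gauge_lt_sqdist y_gt0 t_le1 gy_lt) _.
by rewrite ler_wpM2r ?(ltW y_gt0) // ler_wpM2l.
Qed.

Lemma basic_nbhd_sub_gauge_ball x e : X x -> 0 < e ->
  exists2 V, basic_nbhd A x V & V `<=` metric_ball gauge_dist x e.
Proof.
move=> Xx e_gt0; case: (Xn_cases A Xx) => [Px|Ax|Cx].
- have x_gt0 : 0 < lastc x := Px; pose k := 2 + 6 / lastc x.
  have k_gt0 : 0 < k by rewrite /k addr_gt0 ?divr_gt0.
  pose d := Num.min (Num.min 1 (lastc x / 2)) (e / k).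
  have [d_le1 d_le2 d_le3] : [/\ d <= 1, d <= lastc x / 2 & d <= e / k].
    by rewrite !ge_min !lexx !orbT.
  have d_gt0 : 0 < d by rewrite !lt_min ltr01 !divr_gt0.
  exists (ball x d) => [|y yB].
    by apply: (basic_nbhd_Pn AL Px); apply/andP; split; lra.
  have xy_lt : edist x y < d by rewrite edistC.
  split; first by left; apply: ball_Pn yB; lra.
  apply: le_lt_trans (gauge_dist_near_Pn x_gt0 _ _) _; try lra.
  by rewrite -ltr_pdivlMr //; lra.
- have [d d_gt0 near_x] := gauge_dist_near_A Ax e_gt0.
  exists (ball x d `&` X) => [|y [yB Xy]]; first exact: basic_nbhd_A.
  by split=> //; apply: near_x; rewrite edistC.
- have [d d_gt0 near_x] := gauge_dist_near_C Cx e_gt0.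
  exists (tball x d) => [|y yT]; first exact: basic_nbhd_C.
  by split; [exact: tball_Xn (proj1 Cx) d_gt0 _ yT | exact: near_x].
Qed.

Lemma gauge_ball_sub_basic_nbhd x V : X x -> basic_nbhd A x V ->
  exists2 e, 0 < e & metric_ball gauge_dist x e `<=` V.
Proof.
move=> Xx [VP VA VC].
have ball_sub e y : gauge_dist x y < e -> ball x e y.
  by move=> xy; change (edist y x < e); rewrite edistC;
    apply: le_lt_trans (edist_le_gauge_dist x y) xy.
case: (Xn_cases A Xx) => [Px|Ax|Cx].
- by have [e /andP[e_gt0 _] ->] := VP Px; exists e => // y [_ /ball_sub].
- by have [e e_gt0 ->] := VA Ax; exists e => // y [Xy /ball_sub].
- by have [e e_gt0 ->] := VC Cx; exact: gauge_ball_sub_tball.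
Qed.

End GaugeMetric.

Lemma countable_metrizable (R : realType) (m : nat) (A : set 'rV[R]_m.+1) :
  A `<=` @Ln R m.+1 -> countable (@Ln R m.+1 `\` A) -> metrizable_tau A.
Proof.
move=> AL /countable_injP [idx idx_inj].
exists (gauge_dist A idx); split; first exact: gauge_dist_metric.
move=> U; split=> [[UX UO]|[UX UM]]; split=> // x Ux.
- have [V xV VU] := UO x Ux.
  have [e e_gt0 eV] := gauge_ball_sub_basic_nbhd idx (UX x Ux) xV.
  by exists e => // y /eV /VU.
- have [e e_gt0 eU] := UM x Ux.
  have [V xV Ve] := basic_nbhd_sub_gauge_ball AL idx_inj (UX x Ux) e_gt0.
  by exists V => // y /Ve /eU.
Qed.

Unset Implicit Arguments.

Theorem mainTheorem2 (R : realType) (n : nat) (A : set 'rV[R]_n) :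
  (1 < n)%N -> A `<=` @Ln R n ->
  [<-> hered_lindelof A;
       countable (@Ln R n `\` A);
       second_countable_tau A;
       metrizable_tau A].
Proof.
case: n A => [//|m] A _ AL.
have i_ii := hered_lindelof_countable AL.
have ii_iv := countable_metrizable AL.
have iv_iii := metrizable_second_countable AL.
have iii_i := @second_countable_hered_lindelof R m A.
tfae.
- exact: i_ii.
- by move=> /ii_iv /iv_iii.
- by move=> /iii_i /i_ii /ii_iv.
- by move=> /iv_iii /iii_i.
Qed.
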